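(* Let $d=2$, $\varepsilon>0$, $L=q^{-1-\varepsilon/3}$, $l=q^{-L-1}$, fix an environment $\omega$, and let $E=\{\eta:\ 0\text{ belongs to a super-good path of length }l\}$ and $A=\{\eta:\ \eta_0=i\}$. Then $E$ and $A$ satisfy the following, with $N=4L^2l$, $D=3L$, $V=3L^2$: for every $\eta\in E$ there exist configurations $\eta_0,\dots,\eta_N$ and sites $x_0,\dots,x_{N-1}$ such that (1) $\eta_0=\eta$; (2) $\eta_N\in A$; (3) $\eta_{i+1}=\eta_i^{x_i}$ or $\eta_{i+1}=\eta_i$; (4) $c_{x_i}(\eta_i)=1$; (5) for all $i\le N$, $\eta_i$ differs from $\eta$ on a set $X$ with $|X|\le D$, and $X$ is contained in a set $Y(x_i)$, depending only on $x_i$, with $|Y(x_i)|\le V$.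
   Context: Environment $\omega\in\{\text{susceptible},\text{immune}\}^{\mathbb{Z}^2}$, $\mathcal{S}$ the set of susceptible sites, configurations $\eta\in\{i,h\}^{\mathcal{S}}$ ($i$ infected, $h$ healthy). For $x\in\mathcal{S}$, $c_x(\eta)=1$ if $x$ has at least 2 nearest neighbours that are susceptible and infected in $\eta$, else $0$; $\eta^x$ is $\eta$ with the state at $x$ flipped. Boxes are the sets $L\hat x+[L]^2$, $\hat x\in\mathbb{Z}^2$, $[L]=\{1,\dots,L\}$ ($L$, $l$ rounded to integers); a path of boxes of length $l$ is a sequence of $l$ distinct boxes whose consecutive indices are nearest neighbours. A box is good (for $\omega,\eta$) if all its sites are susceptible and each of its rows and columns contains at least one infected site; a path is super-good if all its boxes are good and one of them contains a row or column all of whose sites are infected. ''$0$ belongs to the path'' means the box containing the origin is one of its boxes. *)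

From Stdlib Require Import Reals ZArith List Lia Lra Bool.
Open Scope Z_scope.

Definition site := (Z * Z)%type.

(* Environment: omega x = true iff x is susceptible (false = immune). *)
Definition env := site -> bool.

(* Configuration: eta x = true iff x is infected (i), false = healthy (h).
   Only the values on susceptible sites are meaningful. *)
Definition config := site -> bool.

Definition site_eqb (x y : site) : bool :=
  Z.eqb (fst x) (fst y) && Z.eqb (snd x) (snd y).

Definition flip (eta : config) (x : site) : config :=
  fun y => if site_eqb y x then negb (eta y) else eta y.

Definition neighbours (x : site) : list site :=
  ((fst x + 1, snd x) :: (fst x - 1, snd x) ::
   (fst x, snd x + 1) :: (fst x, snd x - 1) :: nil).

Definition constraint (omega : env) (eta : config) (x : site) : Prop :=
  (2 <= length (filter (fun y => omega y && eta y) (neighbours x)))%nat.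

Definition card_le (P : site -> Prop) (n : nat) : Prop :=
  exists s : list site, (length s <= n)%nat /\ forall x, P x -> In x s.

Definition box_site (L : Z) (b : site) (i j : Z) : site :=
  (L * fst b + i, L * snd b + j).

Definition in_box (L : Z) (b : site) (x : site) : Prop :=
  L * fst b + 1 <= fst x <= L * fst b + L /\
  L * snd b + 1 <= snd x <= L * snd b + L.

Definition good_box (L : Z) (omega : env) (eta : config) (b : site) : Prop :=
  (forall i j, 1 <= i <= L -> 1 <= j <= L -> omega (box_site L b i j) = true) /\
  (forall j, 1 <= j <= L -> exists i, 1 <= i <= L /\ eta (box_site L b i j) = true) /\
  (forall i, 1 <= i <= L -> exists j, 1 <= j <= L /\ eta (box_site L b i j) = true).

Definition has_full_line (L : Z) (eta : config) (b : site) : Prop :=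
  (exists j, 1 <= j <= L /\ forall i, 1 <= i <= L -> eta (box_site L b i j) = true) \/
  (exists i, 1 <= i <= L /\ forall j, 1 <= j <= L -> eta (box_site L b i j) = true).

Definition nn (a b : site) : Prop :=
  Z.abs (fst a - fst b) + Z.abs (snd a - snd b) = 1.

Definition box_path (l : nat) (p : list site) : Prop :=
  length p = l /\ NoDup p /\
  forall k, (S k < length p)%nat -> nn (nth k p (0, 0)) (nth (S k) p (0, 0)).

Definition super_good (L : Z) (omega : env) (eta : config) (p : list site) : Prop :=
  (forall b, In b p -> good_box L omega eta b) /\
  exists b, In b p /\ has_full_line L eta b.

Definition event_E (L : Z) (l : nat) (omega : env) (eta : config) : Prop :=
  exists p, box_path l p /\ super_good L omega eta p /\
            exists b, In b p /\ in_box L b (0, 0).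

(* A : eta_0 = i (the origin is a susceptible, infected site) *)
Definition event_A (omega : env) (eta : config) : Prop :=
  omega (0, 0) = true /\ eta (0, 0) = true.

Definition scaleL (q eps : R) : Z := Int_part (Rpower q (- 1 - eps / 3)).
Definition scalel (q eps : R) : Z :=
  Int_part (Rpower q (- IZR (scaleL q eps) - 1)).

(** A configuration that agrees with [eta] except on a few full lines of a good box can be
    rearranged by legal flips.  A line next to a fully infected line is grown site by site,
    starting from one of its infected sites: every new site has two infected neighbours, its
    predecessor on the growing line and its partner on the full line.  Since the dynamics is
    reversible, the old line is then erased by running the same growth backwards.  Repeating
    this moves a full line across a box, into the neighbouring box, and (dragging a
    perpendicular trail along, then undoing the transposed construction) turns a row into a
    column.  Walking along the super-good path from the box with a full line to the box of the
    origin costs at most [(2L - 1) * 2(L - 1)] flips per box.  At every moment the changed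
    sites lie on at most three lines of the current box and its frame, whence [D = 3L], and
    [Y(x)] is the box of [x] with its one-site frame, of size [(L + 2)^2 <= 3L^2]. *)

From Stdlib Require Import Reals ZArith List Lia Lra Bool FunctionalExtensionality.
Import ListNotations.
Open Scope Z_scope.

Lemma site_eq_dec (x y : site) : {x = y} + {x <> y}.
Proof. decide equality; apply Z.eq_dec. Qed.

Lemma site_eqb_spec x y : site_eqb x y = true <-> x = y.
Proof.
  destruct x, y; unfold site_eqb; simpl. rewrite andb_true_iff, !Z.eqb_eq.
  split; [intros [-> ->] | intros E; injection E]; auto.
Qed.

Lemma flip_or_same (s s' : config) x : (forall y, y <> x -> s' y = s y) -> s' = flip s x \/ s' = s.
Proof.
  intros Hloc.
  destruct (Bool.bool_dec (s' x) (s x)) as [E|E]; [right | left];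
    apply functional_extensionality; intro y; unfold flip;
    destruct (site_eq_dec y x) as [->|Hy].
  - exact E.
  - apply Hloc, Hy.
  - rewrite (proj2 (site_eqb_spec x x) eq_refl). destruct (s' x), (s x); simpl; congruence.
  - destruct (site_eqb y x) eqn:Ey; [now apply site_eqb_spec in Ey | apply Hloc, Hy].
Qed.

Lemma neighbours_irrefl x : ~ In x (neighbours x).
Proof.
  destruct x as [a c]; unfold neighbours; simpl.
  intros [E|[E|[E|[E|[]]]]]; injection E; lia.
Qed.

Lemma constraint_of_two omega (s : config) x a c :
  In a (neighbours x) -> In c (neighbours x) -> a <> c ->
  omega a && s a = true -> omega c && s c = true -> constraint omega s x.
Proof.
  intros Ha Hc Hac Hsa Hsc. unfold constraint.
  change 2%nat with (length [a; c]). apply NoDup_incl_length.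
  - constructor; [simpl; intuition | constructor; [simpl; tauto | constructor]].
  - intros y [<- | [<- | []]]; apply filter_In; auto.
Qed.

Lemma constraint_local omega (s s' : config) x :
  (forall y, y <> x -> s' y = s y) -> constraint omega s x -> constraint omega s' x.
Proof.
  unfold constraint. intros Hloc.
  erewrite filter_ext_in; [intro H; exact H|].
  intros y Hy. simpl. rewrite Hloc; [easy|]. intros ->. exact (neighbours_irrefl _ Hy).
Qed.

Definition setU (A B : site -> bool) : site -> bool := fun y => A y || B y.
Infix "∪" := setU (at level 50, left associativity).
Definition set0 : site -> bool := fun _ => false.

Lemma setUC A B : A ∪ B = B ∪ A.
Proof. apply functional_extensionality; intro y; apply orb_comm. Qed.

Lemma setUA A B C : A ∪ (B ∪ C) = A ∪ B ∪ C.
Proof. apply functional_extensionality; intro y; apply orb_assoc. Qed.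

Lemma setU_absorb A B : (forall y, A y = true -> B y = true) -> A ∪ B = B.
Proof.
  intros HAB. apply functional_extensionality; intro y. unfold setU.
  destruct (A y) eqn:E; [now rewrite HAB | easy].
Qed.

Definition within (A : site -> bool) (l : list site) : Prop := forall y, A y = true -> In y l.

Definition card_set (A : site -> bool) (n : nat) : Prop := card_le (fun y => A y = true) n.

Lemma card_le_mono (P Q : site -> Prop) n : (forall y, Q y -> P y) -> card_le P n -> card_le Q n.
Proof. intros HQP [l [Hl Hin]]. exists l; split; auto. Qed.

Lemma card_set0 n : card_set set0 n.
Proof. exists []. split; [simpl; lia | discriminate]. Qed.

Lemma card_set_weaken A m n : (m <= n)%nat -> card_set A m -> card_set A n.
Proof. intros Hmn [l [Hl Hin]]. exists l. split; [lia | easy]. Qed.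

Lemma card_set_mono A B n : (forall y, A y = true -> B y = true) -> card_set B n -> card_set A n.
Proof. intros HAB. apply card_le_mono, HAB. Qed.

Lemma card_setU A B m n : card_set A m -> card_set B n -> card_set (A ∪ B) (m + n).
Proof.
  intros [l [Hl HA]] [l' [Hl' HB]]. exists (l ++ l'). split.
  - rewrite length_app. lia.
  - intros y Hy. apply in_or_app. unfold setU in Hy.
    destruct (A y) eqn:E; [left; auto | right; auto].
Qed.

Section Dynamics.
Variables (omega : env) (eta : config) (Y : site -> list site) (D : nat).

Definition differs (s : config) (y : site) : Prop := s y <> eta y.

Definition controlled (x : site) (s : config) : Prop :=
  (forall y, differs s y -> In y (Y x)) /\ card_le (differs s) D.

(* Both endpoints are required to be controlled, so that steps, hence runs, can be reversed. *)
Record step (s : config) (x : site) (s' : config) : Prop := {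
  step_susceptible : omega x = true;
  step_constraint : constraint omega s x;
  step_local : forall y, y <> x -> s' y = s y;
  step_controlled : controlled x s;
  step_controlled' : controlled x s' }.

Inductive run : config -> nat -> config -> Prop :=
  | run_nil s : run s 0 s
  | run_cons s x s' n s'' : step s x s' -> run s' n s'' -> run s (S n) s''.

Lemma run_trans s1 n1 s2 n2 s3 : run s1 n1 s2 -> run s2 n2 s3 -> run s1 (n1 + n2) s3.
Proof. induction 1; simpl; [easy|]. intros; eapply run_cons; eauto. Qed.

Lemma run_step s x s' : step s x s' -> run s 1 s'.
Proof. intros H. eapply run_cons; [exact H | constructor]. Qed.

Lemma step_sym s x s' : step s x s' -> step s' x s.
Proof.
  intros [Hx Hc Hloc Hs Hs']. split; auto.
  - exact (constraint_local omega s s' x Hloc Hc).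
  - intros y Hy. symmetry; auto.
Qed.

Lemma run_rev s n s' : run s n s' -> run s' n s.
Proof.
  induction 1 as [|s x s' n s'' Hstep _ IH]; [constructor|].
  replace (S n) with (n + 1)%nat by lia.
  eapply run_trans; [exact IH | exact (run_step _ _ _ (step_sym _ _ _ Hstep))].
Qed.

Lemma run_march (F : Z -> config) a d m n :
  (forall t, (t < n)%nat -> run (F (a + d * Z.of_nat t)) m (F (a + d * Z.of_nat (S t)))) ->
  run (F a) (n * m) (F (a + d * Z.of_nat n)).
Proof.
  induction n as [|n IH]; intros Hstep.
  - replace (a + d * Z.of_nat 0) with a by lia. constructor.
  - replace (S n * m)%nat with (n * m + m)%nat by lia.
    eapply run_trans; [apply IH; auto | apply Hstep; lia].
Qed.

Lemma run_stay s x n : step s x s -> run s n s.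
Proof. intros H. induction n; [constructor | eapply run_cons; eauto]. Qed.

Lemma run_sequence s n s' : run s n s' ->
  exists (ss : nat -> config) (xs : nat -> site), ss 0%nat = s /\ ss n = s' /\
    forall i, (i < n)%nat -> step (ss i) (xs i) (ss (S i)).
Proof.
  induction 1 as [s|s x s' n s'' Hstep _ (ss & xs & H0 & Hn & Hss)].
  - exists (fun _ => s), (fun _ => (0, 0)). split; [easy | split; [easy | intros; lia]].
  - exists (fun i => match i with O => s | S i => ss i end),
      (fun i => match i with O => x | S i => xs i end).
    split; [easy | split; [easy|]]. intros [|i] Hi; [rewrite H0; easy | apply Hss; lia].
Qed.

Lemma step_setU x A A' :
  omega x = true -> constraint omega (eta ∪ A) x -> (forall y, y <> x -> A' y = A y) ->
  within (A ∪ A') (Y x) -> card_set (A ∪ A') D -> step (eta ∪ A) x (eta ∪ A').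
Proof.
  intros Hx Hc Hloc HY Hcard.
  assert (Hdiff : forall B y, differs (eta ∪ B) y -> B y = true).
  { unfold differs, setU. intros B y. destruct (eta y), (B y); simpl; congruence. }
  assert (Hl : forall y, differs (eta ∪ A) y -> (A ∪ A') y = true)
    by (intros y Hy; unfold setU; now rewrite (Hdiff _ _ Hy)).
  assert (Hr : forall y, differs (eta ∪ A') y -> (A ∪ A') y = true)
    by (intros y Hy; unfold setU; now rewrite (Hdiff _ _ Hy), orb_true_r).
  split; auto.
  - intros y Hy. unfold setU. rewrite Hloc; auto.
  - split; [intros y Hy; apply HY, Hl, Hy | exact (card_le_mono _ _ _ Hl Hcard)].
  - split; [intros y Hy; apply HY, Hr, Hy | exact (card_le_mono _ _ _ Hr Hcard)].
Qed.

End Dynamics.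

Definition in_frame (L : Z) (b y : site) : Prop :=
  L * fst b <= fst y <= L * fst b + L + 1 /\ L * snd b <= snd y <= L * snd b + L + 1.

Section Lines.
Variable L : Z.

Definition swap_if (o : bool) (y : site) : site := if o then (snd y, fst y) else y.

(* [cell o b j k] is the [k]-th site of the [j]-th line of the box [b]; lines are rows for
   [o = false] and columns for [o = true].  Indices [0] and [L + 1] reach into the frame.
   [seg o b j a a'] is the part of that line between positions [a] and [a'], in either order. *)
Definition cell (o : bool) (b : site) (j k : Z) : site :=
  swap_if o (L * fst (swap_if o b) + k, L * snd (swap_if o b) + j).

Definition seg (o : bool) (b : site) (j a a' : Z) (y : site) : bool :=
  (snd (swap_if o y) =? L * snd (swap_if o b) + j) &&
  (Z.min a a' <=? fst (swap_if o y) - L * fst (swap_if o b)) &&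
  (fst (swap_if o y) - L * fst (swap_if o b) <=? Z.max a a').

Definition line (o : bool) (b : site) (j : Z) : site -> bool := seg o b j 1 L.

Lemma seg_spec o b j a a' y :
  seg o b j a a' y = true <-> exists k, Z.min a a' <= k <= Z.max a a' /\ y = cell o b j k.
Proof.
  unfold seg, cell. rewrite !andb_true_iff, Z.eqb_eq, !Z.leb_le.
  destruct o, y as [y1 y2], b as [b1 b2]; simpl; split.
  - intros [[H1 H2] H3]. exists (y2 - L * b2). split; [lia | f_equal; lia].
  - intros (k & Hk & E). injection E as -> ->. lia.
  - intros [[H1 H2] H3]. exists (y1 - L * b1). split; [lia | f_equal; lia].
  - intros (k & Hk & E). injection E as -> ->. lia.
Qed.

Lemma seg_cell o b j a a' k : Z.min a a' <= k <= Z.max a a' -> seg o b j a a' (cell o b j k) = true.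
Proof. intros Hk. apply seg_spec. eauto. Qed.

Lemma seg_mono o b j m h h' y : Z.min m h' <= h <= Z.max m h' ->
  seg o b j m h y = true -> seg o b j m h' y = true.
Proof. rewrite !seg_spec. intros Hh (k & Hk & ->). exists k. split; auto; lia. Qed.

Lemma seg_sub_line o b j a a' y : 1 <= a <= L -> 1 <= a' <= L ->
  seg o b j a a' y = true -> line o b j y = true.
Proof. intros Ha Ha' Hy. apply seg_spec in Hy as (k & Hk & ->). apply seg_cell. lia. Qed.

Lemma seg_full o b j a a' : Z.min a a' = 1 -> Z.max a a' = L -> seg o b j a a' = line o b j.
Proof. intros H1 H2. unfold line, seg. rewrite H1, H2, Z.min_l, Z.max_r by lia. reflexivity. Qed.

Lemma cell_inj o b j k j' k' : cell o b j k = cell o b j' k' -> j = j' /\ k = k'.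
Proof. destruct o, b; unfold cell; simpl; intro E; injection E; lia. Qed.

Lemma seg_extend o b j m h s y : (s = 1 \/ s = -1) -> 0 <= s * (h - m) ->
  y <> cell o b j (h + s) -> seg o b j m (h + s) y = seg o b j m h y.
Proof.
  intros Hs Hdir Hy. apply eq_iff_eq_true. rewrite !seg_spec.
  split; intros (k & Hk & ->); exists k; split; auto; [|destruct Hs; subst; lia].
  assert (k <> h + s) by (intros ->; auto). destruct Hs; subst; lia.
Qed.

Lemma cell_neighbour o b j k j' k' :
  Z.abs (j - j') + Z.abs (k - k') = 1 -> In (cell o b j' k') (neighbours (cell o b j k)).
Proof.
  intros H.
  assert (j' = j /\ k' = k + 1 \/ j' = j /\ k' = k - 1 \/ j' = j + 1 /\ k' = k \/ j' = j - 1 /\ k' = k)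
    as [[-> ->]|[[-> ->]|[[-> ->]|[-> ->]]]] by lia;
  destruct o, b; unfold cell, neighbours; simpl; repeat (left; f_equal; lia) || right.
Qed.

Lemma cell_negb o b j k : cell (negb o) b j k = cell o b k j.
Proof. destruct o, b; reflexivity. Qed.

Lemma cell_shift o b b' e j k : swap_if o b' = (fst (swap_if o b), snd (swap_if o b) + e) ->
  cell o b' j k = cell o b (j + L * e) k.
Proof. intros E. unfold cell. rewrite E. simpl. f_equal. f_equal; ring. Qed.

Lemma seg_shift o b b' e j a a' : swap_if o b' = (fst (swap_if o b), snd (swap_if o b) + e) ->
  seg o b' j a a' = seg o b (j + L * e) a a'.
Proof.
  intros E. apply functional_extensionality; intro y. apply eq_iff_eq_true. rewrite !seg_spec.
  split; intros (k & Hk & ->); exists k; split; auto; now rewrite (cell_shift o b b' e).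
Qed.

Lemma cell_in_box o b j k : 1 <= j <= L -> 1 <= k <= L -> in_box L b (cell o b j k).
Proof. destruct o, b; unfold in_box, cell; simpl; lia. Qed.

Lemma seg_in_frame o b j a a' y : 0 <= j <= L + 1 -> 0 <= a <= L + 1 -> 0 <= a' <= L + 1 ->
  seg o b j a a' y = true -> in_frame L b y.
Proof.
  intros Hj Ha Ha' Hy. apply seg_spec in Hy as (k & Hk & ->).
  destruct o, b; unfold in_frame, cell; simpl; lia.
Qed.

Lemma card_seg o b j a a' : 1 <= a <= L -> 1 <= a' <= L -> card_set (seg o b j a a') (Z.to_nat L).
Proof.
  intros Ha Ha'. exists (map (fun n => cell o b j (Z.of_nat n + 1)) (seq 0 (Z.to_nat L))). split.
  - rewrite length_map, length_seq. lia.
  - intros y Hy. apply seg_spec in Hy as (k & Hk & ->). apply in_map_iff.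
    exists (Z.to_nat (k - 1)). split; [f_equal; lia | apply in_seq; lia].
Qed.

End Lines.

Lemma nn_frame_shift o b b' : nn b b' -> exists e, (e = 1 \/ e = -1) /\
  (swap_if o b' = (fst (swap_if o b), snd (swap_if o b) + e) \/
   swap_if (negb o) b' = (fst (swap_if (negb o) b), snd (swap_if (negb o) b) + e)).
Proof.
  (* exactly one of the two coordinate differences is nonzero *)
  unfold nn. intros Hnn. exists (fst b' - fst b + (snd b' - snd b)). split; [lia|].
  destruct o, b as [b1 b2], b' as [c1 c2]; simpl in *;
    destruct (Z.eq_dec b1 c1); [right | left | left | right]; f_equal; lia.
Qed.

(* The box of [x], whose index is [(x - 1) / L] coordinatewise, together with its one-site frame. *)
Definition framed_box (L : Z) (x : site) : list site :=
  map (fun p => (L * ((fst x - 1) / L) + Z.of_nat (fst p), L * ((snd x - 1) / L) + Z.of_nat (snd p)))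
    (list_prod (seq 0 (Z.to_nat (L + 2))) (seq 0 (Z.to_nat (L + 2)))).

Lemma framed_box_length L x : 3 <= L -> (length (framed_box L x) <= 3 * Z.to_nat L * Z.to_nat L)%nat.
Proof. intros HL. unfold framed_box. rewrite length_map, length_prod, length_seq. nia. Qed.

Lemma in_framed_box L b x y : 0 < L -> in_box L b x -> in_frame L b y -> In y (framed_box L x).
Proof.
  intros HL [Hx1 Hx2] [Hy1 Hy2]. unfold framed_box.
  assert (E1 : (fst x - 1) / L = fst b)
    by (symmetry; apply Z.div_unique with (r := fst x - 1 - L * fst b); lia).
  assert (E2 : (snd x - 1) / L = snd b)
    by (symmetry; apply Z.div_unique with (r := snd x - 1 - L * snd b); lia).
  rewrite E1, E2. apply in_map_iff.
  exists (Z.to_nat (fst y - L * fst b), Z.to_nat (snd y - L * snd b)). split.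
  - destruct y; simpl in *; f_equal; lia.
  - apply in_prod; apply in_seq; lia.
Qed.

Section LineMoves.
Variables (L : Z) (omega : env) (eta : config) (Y : site -> list site) (D : nat).
Local Notation run := (run omega eta Y D).
Local Notation cell := (cell L).
Local Notation seg := (seg L).
Local Notation line := (line L).

Section Growth.
Variables (o : bool) (b : site) (i i' : Z).
Hypothesis adjacent : Z.abs (i - i') = 1.
Hypothesis susceptible :
  forall k, 1 <= k <= L -> omega (cell o b i k) = true /\ omega (cell o b i' k) = true.
Variable m : Z.
Hypothesis m_range : 1 <= m <= L.
Hypothesis pivot : eta (cell o b i m) = true.

Lemma grow_step A U h s : (forall k, 1 <= k <= L -> A (cell o b i' k) = true) ->
  (s = 1 \/ s = -1) -> 1 <= h <= L -> 1 <= h + s <= L -> 0 <= s * (h - m) ->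
  (forall y, (A ∪ seg o b i m (h + s)) y = true -> U y = true) ->
  within U (Y (cell o b i (h + s))) -> card_set U D ->
  step omega eta Y D (eta ∪ (A ∪ seg o b i m h)) (cell o b i (h + s))
    (eta ∪ (A ∪ seg o b i m (h + s))).
Proof.
  intros support Hs Hh Hhs Hdir HU HY Hcard.
  assert (Hsub : forall y,
    (A ∪ seg o b i m h ∪ (A ∪ seg o b i m (h + s))) y = true -> U y = true).
  { intros y Hy. apply HU. unfold setU in *. rewrite !orb_true_iff in *.
    destruct Hy as [[Hy|Hy]|Hy]; auto.
    right. apply seg_mono with h; [destruct Hs; subst; lia | exact Hy]. }
  apply step_setU.
  - apply susceptible. lia.
  - apply (constraint_of_two omega _ _ (cell o b i h) (cell o b i' (h + s))).
    + apply cell_neighbour. destruct Hs; subst; lia.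
    + apply cell_neighbour. lia.
    + intros E. apply cell_inj in E. lia.
    + unfold setU. rewrite (proj1 (susceptible h Hh)), seg_cell by lia. now rewrite !orb_true_r.
    + unfold setU. rewrite (proj2 (susceptible (h + s) Hhs)), support by lia. now rewrite orb_true_r.
  - intros y Hy. unfold setU. rewrite seg_extend; auto; lia.
  - intros y Hy. apply HY, Hsub, Hy.
  - exact (card_set_mono _ _ _ Hsub Hcard).
Qed.

Lemma grow_segment A U s t : (forall k, 1 <= k <= L -> A (cell o b i' k) = true) ->
  (s = 1 \/ s = -1) -> 1 <= m + s * Z.of_nat t <= L ->
  (forall y, (A ∪ seg o b i m (m + s * Z.of_nat t)) y = true -> U y = true) ->
  (forall k, 1 <= k <= L -> within U (Y (cell o b i k))) -> card_set U D ->
  run (eta ∪ A) t (eta ∪ (A ∪ seg o b i m (m + s * Z.of_nat t))).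
Proof.
  intros support Hs Ht HU HY Hcard.
  assert (Hstart : eta ∪ A = eta ∪ (A ∪ seg o b i m m)).
  { apply functional_extensionality; intro y. unfold setU.
    destruct (seg o b i m m y) eqn:E; [|now rewrite orb_false_r].
    apply seg_spec in E as (k & Hk & ->). replace k with m by lia. now rewrite pivot. }
  rewrite Hstart.
  replace t with (t * 1)%nat at 1 by lia.
  refine (run_march _ _ _ _ (fun h => eta ∪ (A ∪ seg o b i m h)) m s 1 t _).
  intros u Hu. set (h := m + s * Z.of_nat u).
  replace (m + s * Z.of_nat (S u)) with (h + s) by (unfold h; lia).
  apply run_step with (x := cell o b i (h + s)), (grow_step A U); auto;
    try (unfold h; destruct Hs; subst; lia).
  - intros y Hy. apply HU. unfold setU in *. rewrite !orb_true_iff in *.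
    destruct Hy as [Hy|Hy]; auto.
    right. apply seg_mono with (h + s); [unfold h; destruct Hs; subst; lia | exact Hy].
  - apply HY. unfold h; destruct Hs; subst; lia.
Qed.

Lemma grow_line A : (forall k, 1 <= k <= L -> A (cell o b i' k) = true) ->
  (forall k, 1 <= k <= L -> within (A ∪ line o b i) (Y (cell o b i k))) ->
  card_set (A ∪ line o b i) D ->
  run (eta ∪ A) (Z.to_nat (L - 1)) (eta ∪ (A ∪ line o b i)).
Proof.
  intros support HY Hcard.
  assert (Hfull : A ∪ seg o b i m L ∪ seg o b i m 1 = A ∪ line o b i).
  { rewrite <- setUA. f_equal. apply functional_extensionality; intro y.
    apply eq_iff_eq_true. unfold setU, line. rewrite orb_true_iff, !seg_spec.
    split; [intros [(k & Hk & ->)|(k & Hk & ->)] | intros (k & Hk & ->)];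
      try (exists k; split; [lia|easy]).
    destruct (Z.le_gt_cases m k); [left|right]; exists k; split; [lia|easy|lia|easy]. }
  assert (Hup : run (eta ∪ A) (Z.to_nat (L - m)) (eta ∪ (A ∪ seg o b i m L))).
  { pose proof (grow_segment A (A ∪ line o b i) 1 (Z.to_nat (L - m))) as H.
    replace (m + 1 * Z.of_nat (Z.to_nat (L - m))) with L in H by lia.
    apply H; auto; [lia|]. intros y. unfold setU. rewrite !orb_true_iff.
    intros [Hy|Hy]; [left | right; apply seg_sub_line with m L]; auto; lia. }
  assert (Hdown : run (eta ∪ (A ∪ seg o b i m L)) (Z.to_nat (m - 1)) (eta ∪ (A ∪ line o b i))).
  { pose proof (grow_segment (A ∪ seg o b i m L) (A ∪ line o b i) (-1) (Z.to_nat (m - 1))) as H.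
    replace (m + -1 * Z.of_nat (Z.to_nat (m - 1))) with 1 in H by lia.
    rewrite Hfull in H. apply H; auto; [|lia].
    intros k Hk. unfold setU. now rewrite support. }
  replace (Z.to_nat (L - 1)) with (Z.to_nat (L - m) + Z.to_nat (m - 1))%nat by lia.
  eapply run_trans; eauto.
Qed.

End Growth.

Lemma line_move o b j j' T : Z.abs (j - j') = 1 ->
  (forall k, 1 <= k <= L -> omega (cell o b j k) = true /\ omega (cell o b j' k) = true) ->
  (exists m, 1 <= m <= L /\ eta (cell o b j m) = true) ->
  (exists m, 1 <= m <= L /\ eta (cell o b j' m) = true) ->
  (forall k, 1 <= k <= L -> within (T ∪ line o b j ∪ line o b j') (Y (cell o b j k)) /\
                            within (T ∪ line o b j ∪ line o b j') (Y (cell o b j' k))) ->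
  card_set (T ∪ line o b j ∪ line o b j') D ->
  run (eta ∪ (T ∪ line o b j)) (2 * Z.to_nat (L - 1)) (eta ∪ (T ∪ line o b j')).
Proof.
  intros Hadj Hsusc [m [Hm Hpiv]] [m' [Hm' Hpiv']] HY Hcard.
  assert (Hcomm : T ∪ line o b j' ∪ line o b j = T ∪ line o b j ∪ line o b j').
  { rewrite <- !setUA. f_equal. apply setUC. }
  assert (Hline : forall j'' k, 1 <= k <= L -> (T ∪ line o b j'') (cell o b j'' k) = true)
    by (intros j'' k Hk; unfold setU, line; now rewrite seg_cell, orb_true_r by lia).
  replace (2 * Z.to_nat (L - 1))%nat with (Z.to_nat (L - 1) + Z.to_nat (L - 1))%nat by lia.
  eapply run_trans.
  - apply (grow_line o b j' j) with (m := m'); auto; [lia | |].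
    + intros k Hk. split; apply Hsusc; auto.
    + intros k Hk. apply HY; auto.
  - apply run_rev. rewrite <- Hcomm.
    apply (grow_line o b j j') with (m := m); auto.
    + rewrite Hcomm. intros k Hk. apply HY; auto.
    + now rewrite Hcomm.
Qed.

End LineMoves.

Lemma nn_sym a b : nn a b -> nn b a.
Proof. unfold nn; lia. Qed.

Lemma box_path_segment l p bf bo : box_path l p -> In bf p -> In bo p ->
  exists K (g : nat -> site), (K < l)%nat /\ g 0%nat = bf /\ g K = bo /\
    (forall k, (k < K)%nat -> nn (g k) (g (S k))) /\ (forall k, (k <= K)%nat -> In (g k) p).
Proof.
  intros (Hlen & _ & Hnn) Hbf Hbo.
  destruct (In_nth p bf (0, 0) Hbf) as (f & Hf & Ef), (In_nth p bo (0, 0) Hbo) as (i & Hi & Ei).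
  destruct (Nat.le_gt_cases f i).
  - exists (i - f)%nat, (fun k => nth (f + k) p (0, 0)).
    split; [lia | split; [now rewrite Nat.add_0_r |]].
    split; [now replace (f + (i - f))%nat with i by lia |].
    split; intros k Hk; [rewrite Nat.add_succ_r; apply Hnn; lia | apply nth_In; lia].
  - exists (f - i)%nat, (fun k => nth (f - k) p (0, 0)).
    split; [lia | split; [now rewrite Nat.sub_0_r |]].
    split; [now replace (f - (f - i))%nat with i by lia |].
    split; intros k Hk; [| apply nth_In; lia].
    apply nn_sym. replace (f - k)%nat with (S (f - S k)) by lia. apply Hnn. lia.
Qed.

Lemma full_line_absorbed L eta b : has_full_line L eta b ->
  exists o j, 1 <= j <= L /\ eta ∪ line L o b j = eta.
Proof.
  intros [(j & Hj & Hall) | (j & Hj & Hall)]; [exists false | exists true]; exists j; split; auto;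
    apply functional_extensionality; intro y; unfold setU;
    destruct (line L _ b j y) eqn:E; try apply orb_false_r;
    apply seg_spec in E as (k & Hk & ->); rewrite orb_true_r; symmetry; apply (Hall k); lia.
Qed.

Section Boxes.
Variables (L : Z) (omega : env) (eta : config).
Hypothesis L_ge3 : 3 <= L.
Local Notation run := (run omega eta (framed_box L) (3 * Z.to_nat L)).
Local Notation good := (good_box L omega eta).
Local Notation cell := (cell L).
Local Notation seg := (seg L).
Local Notation line := (line L).
Local Notation move_time := (2 * Z.to_nat (L - 1))%nat.

Lemma good_cell o b j k : good b -> 1 <= j <= L -> 1 <= k <= L -> omega (cell o b j k) = true.
Proof.
  intros [H _] Hj Hk. destruct o, b; unfold cell; simpl; [apply (H j k) | apply (H k j)]; auto.
Qed.

Lemma good_pivot o b j : good b -> 1 <= j <= L -> exists m, 1 <= m <= L /\ eta (cell o b j m) = true.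
Proof.
  intros [_ [Hrow Hcol]] Hj. destruct o, b; unfold cell; simpl.
  - destruct (Hcol j Hj) as (m & Hm & E). eauto.
  - destruct (Hrow j Hj) as (m & Hm & E). eauto.
Qed.

Lemma within_framed_box A b x : in_box L b x -> (forall y, A y = true -> in_frame L b y) ->
  within A (framed_box L x).
Proof. intros Hx HA y Hy. apply in_framed_box with b; auto; lia. Qed.

Lemma setU_in_frame A B b : (forall y, A y = true -> in_frame L b y) ->
  (forall y, B y = true -> in_frame L b y) -> forall y, (A ∪ B) y = true -> in_frame L b y.
Proof. unfold setU. intros HA HB y Hy. apply orb_true_iff in Hy as [Hy|Hy]; auto. Qed.

Lemma line_in_frame o b j : 0 <= j <= L + 1 -> forall y, line o b j y = true -> in_frame L b y.
Proof. intros Hj y. apply seg_in_frame; lia. Qed.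

Lemma set0_in_frame b y : set0 y = true -> in_frame L b y.
Proof. discriminate. Qed.

Lemma move_in_box o b j j' T : good b -> Z.abs (j - j') = 1 -> 1 <= j <= L -> 1 <= j' <= L ->
  (forall y, T y = true -> in_frame L b y) -> card_set T (Z.to_nat L) ->
  run (eta ∪ (T ∪ line o b j)) move_time (eta ∪ (T ∪ line o b j')).
Proof.
  intros Hb Hadj Hj Hj' HT Hcard.
  assert (Hframe : forall y, (T ∪ line o b j ∪ line o b j') y = true -> in_frame L b y).
  { repeat apply setU_in_frame; auto; apply line_in_frame; lia. }
  apply line_move; auto.
  - intros k Hk. split; apply good_cell; auto.
  - apply good_pivot; auto.
  - apply good_pivot; auto.
  - intros k Hk. split; apply within_framed_box with b; auto; apply cell_in_box; auto.
  - replace (3 * Z.to_nat L)%nat with (Z.to_nat L + Z.to_nat L + Z.to_nat L)%nat by lia.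
    repeat apply card_setU; auto; apply card_seg; lia.
Qed.

Lemma sweep o b j j' : good b -> 1 <= j <= L -> 1 <= j' <= L ->
  run (eta ∪ line o b j) (Z.to_nat (Z.abs (j' - j)) * move_time) (eta ∪ line o b j').
Proof.
  intros Hb Hj Hj'.
  set (s := if Z.leb j j' then 1 else -1).
  assert (Hs : j' = j + s * Z.of_nat (Z.to_nat (Z.abs (j' - j))))
    by (unfold s; destruct (Z.leb_spec j j'); lia).
  rewrite Hs at 2.
  refine (run_march _ _ _ _ (fun h => eta ∪ line o b h) j s _ _ _).
  intros u Hu. apply (move_in_box o b _ _ set0); auto using set0_in_frame, card_set0;
    unfold s in *; destruct (Z.leb_spec j j'); lia.
Qed.

Lemma sweep_leaving_trail o b c j0 s t : good b -> 1 <= c <= L -> (s = 1 \/ s = -1) ->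
  1 <= j0 <= L -> 1 <= j0 + s * Z.of_nat t <= L ->
  run (eta ∪ line o b j0) (t * move_time)
    (eta ∪ (seg (negb o) b c j0 (j0 + s * Z.of_nat t) ∪ line o b (j0 + s * Z.of_nat t))).
Proof.
  intros Hb Hc Hs Hj0 Ht.
  assert (Hcross : forall h, line o b h (cell (negb o) b c h) = true)
    by (intros h; unfold line; rewrite cell_negb; apply seg_cell; lia).
  rewrite <- (setU_absorb (seg (negb o) b c j0 j0) (line o b j0)) at 1.
  2:{ intros y Hy. apply seg_spec in Hy as (k & Hk & ->). replace k with j0 by lia. apply Hcross. }
  refine (run_march _ _ _ _ (fun h => eta ∪ (seg (negb o) b c j0 h ∪ line o b h)) j0 s _ _ _).
  intros u Hu. set (h := j0 + s * Z.of_nat u).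
  assert (Hh : 1 <= h <= L /\ 1 <= h + s <= L /\ 0 <= s * (h - j0))
    by (unfold h; destruct Hs; subst; lia).
  replace (j0 + s * Z.of_nat (S u)) with (h + s) by (unfold h; lia).
  replace (seg (negb o) b c j0 (h + s) ∪ line o b (h + s))
    with (seg (negb o) b c j0 h ∪ line o b (h + s)).
  - apply move_in_box; auto; [destruct Hs; subst; lia | lia | lia | |].
    + intros y. apply seg_in_frame; lia.
    + apply card_seg; lia.
  - apply functional_extensionality; intro y. unfold setU.
    destruct (site_eq_dec y (cell (negb o) b c (h + s))) as [->|Hy].
    + now rewrite Hcross, !orb_true_r.
    + rewrite seg_extend; auto; lia.
Qed.

Lemma edge_inward j0 : j0 = 1 \/ j0 = L ->
  exists s, (s = 1 \/ s = -1) /\ j0 + s * Z.of_nat (Z.to_nat (L - 1)) = L + 1 - j0.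
Proof. intros [-> | ->]; [exists 1 | exists (-1)]; split; lia. Qed.

Lemma turn_line o b j0 e : good b -> (j0 = 1 \/ j0 = L) -> (e = 1 \/ e = L) ->
  run (eta ∪ line o b j0) (Z.to_nat (L - 1) * move_time + Z.to_nat (L - 1) * move_time)
    (eta ∪ line (negb o) b e).
Proof.
  intros Hb Hj0 He.
  destruct (edge_inward j0 Hj0) as (s & Hs & Hj1), (edge_inward e He) as (s' & Hs' & He1).
  (* Both sweeps end with the [o]-line [L + 1 - j0] and the [negb o]-line [L + 1 - e] infected. *)
  pose proof (sweep_leaving_trail o b (L + 1 - e) j0 s (Z.to_nat (L - 1))) as Hfwd.
  pose proof (sweep_leaving_trail (negb o) b (L + 1 - j0) e s' (Z.to_nat (L - 1))) as Hbwd.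
  rewrite Hj1 in Hfwd. rewrite He1, negb_involutive in Hbwd.
  rewrite seg_full in Hfwd, Hbwd by lia.
  eapply run_trans; [apply Hfwd; auto; lia|].
  rewrite (setUC (line (negb o) b _)). apply run_rev, Hbwd; auto; lia.
Qed.

Lemma cross_to_neighbour o b b' e j0 : good b -> good b' ->
  swap_if o b' = (fst (swap_if o b), snd (swap_if o b) + e) -> (j0 = L /\ e = 1 \/ j0 = 1 /\ e = -1) ->
  run (eta ∪ line o b j0) move_time (eta ∪ line o b' (j0 + e - L * e)).
Proof.
  intros Hb Hb' Eb' Hj0.
  assert (Hcell : forall j k, cell o b' (j - L * e) k = cell o b j k)
    by (intros j k; rewrite (cell_shift L o b b' e) by easy; f_equal; ring).
  assert (Hline : forall j, line o b' (j - L * e) = line o b j)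
    by (intros j; unfold line; rewrite (seg_shift L o b b' e) by easy; f_equal; ring).
  assert (Hframe : forall y, (set0 ∪ line o b j0 ∪ line o b (j0 + e)) y = true -> in_frame L b y)
    by (repeat apply setU_in_frame; auto using set0_in_frame; apply line_in_frame; lia).
  assert (Hframe' :
    forall y, (set0 ∪ line o b j0 ∪ line o b (j0 + e)) y = true -> in_frame L b' y).
  { rewrite <- (Hline j0), <- (Hline (j0 + e)).
    repeat apply setU_in_frame; auto using set0_in_frame; apply line_in_frame; lia. }
  rewrite Hline.
  apply (line_move L omega eta _ _ o b j0 (j0 + e) set0); [lia | | | | |].
  - intros k Hk. rewrite <- (Hcell (j0 + e)). split; apply good_cell; auto; lia.
  - apply good_pivot; auto; lia.
  - destruct (good_pivot o b' (j0 + e - L * e)) as (m & Hm & E); auto; [lia|].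
    rewrite Hcell in E. eauto.
  - intros k Hk. rewrite <- (Hcell (j0 + e)).
    split; [apply within_framed_box with b | apply within_framed_box with b'];
      auto; apply cell_in_box; lia.
  - replace (3 * Z.to_nat L)%nat with (Z.to_nat L + Z.to_nat L + Z.to_nat L)%nat by lia.
    repeat apply card_setU; auto using card_set0.
    + apply card_seg; lia.
    + rewrite <- Hline. apply card_seg; lia.
Qed.

Lemma move_to_neighbour o b b' j : good b -> good b' -> nn b b' -> (j = 1 \/ j = L) ->
  exists o' j' n, (j' = 1 \/ j' = L) /\ (n <= (2 * Z.to_nat L - 1) * move_time)%nat /\
    run (eta ∪ line o b j) n (eta ∪ line o' b' j').
Proof.
  intros Hb Hb' Hnn Hj.
  destruct (nn_frame_shift o b b' Hnn) as (e & He & [Eb' | Eb']);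
    assert (Hj0 : exists j0, j0 = L /\ e = 1 \/ j0 = 1 /\ e = -1) by (destruct He; eauto);
    destruct Hj0 as [j0 Hj0].
  - exists o, (j0 + e - L * e), (Z.to_nat (Z.abs (j0 - j)) * move_time + move_time)%nat.
    split; [lia | split; [nia |]].
    eapply run_trans; [apply sweep | apply cross_to_neighbour]; auto; lia.
  - exists (negb o), (j0 + e - L * e),
      (Z.to_nat (L - 1) * move_time + Z.to_nat (L - 1) * move_time + move_time)%nat.
    split; [lia | split; [nia |]].
    eapply run_trans; [apply turn_line | apply cross_to_neighbour]; auto; lia.
Qed.

Lemma sweep_to_origin o b j : good b -> 1 <= j <= L -> in_box L b (0, 0) ->
  exists j', 1 <= j' <= L /\ line o b j' (0, 0) = true /\
    run (eta ∪ line o b j) (Z.to_nat (Z.abs (j' - j)) * move_time) (eta ∪ line o b j').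
Proof.
  intros Hb Hj Hin. exists (- L * snd (swap_if o b)).
  assert (Hj' : 1 <= - L * snd (swap_if o b) <= L)
    by (destruct o, b; unfold in_box in Hin; simpl in *; lia).
  split; [exact Hj' | split; [| apply sweep; auto]].
  apply seg_spec. exists (- L * fst (swap_if o b)).
  destruct o, b; unfold in_box in Hin; unfold cell; simpl in *;
    split; [lia | f_equal; lia | lia | f_equal; lia].
Qed.

Lemma travel_along K (g : nat -> site) : (forall k, (k < K)%nat -> nn (g k) (g (S k))) ->
  (forall k, (k <= K)%nat -> good (g k)) -> in_box L (g K) (0, 0) ->
  forall o j, (j = 1 \/ j = L) ->
  exists o' j' n, (n <= (K * (2 * Z.to_nat L - 1) + (Z.to_nat L - 1)) * move_time)%nat /\
    1 <= j' <= L /\ line o' (g K) j' (0, 0) = true /\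
    run (eta ∪ line o (g 0%nat) j) n (eta ∪ line o' (g K) j').
Proof.
  revert g. induction K as [|K IH]; intros g Hnn Hgood Hin o j Hj.
  - destruct (sweep_to_origin o (g 0%nat) j) as (j' & Hj' & H0 & Hrun); auto; [lia|].
    exists o, j', (Z.to_nat (Z.abs (j' - j)) * move_time)%nat. split; [nia | auto].
  - destruct (move_to_neighbour o (g 0%nat) (g 1%nat) j) as (o1 & j1 & n1 & Hj1 & Hn1 & Hrun1);
      [apply Hgood; lia | apply Hgood; lia | apply Hnn; lia | easy |].
    destruct (IH (fun k => g (S k))) with (o := o1) (j := j1)
      as (o' & j' & n2 & Hn2 & Hj' & H0 & Hrun2); auto.
    + intros k Hk. apply Hnn. lia.
    + intros k Hk. apply Hgood. lia.
    + exists o', j', (n1 + n2)%nat.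
      split; [nia | split; [easy | split; [easy | eapply run_trans; eauto]]].
Qed.

Lemma reach_origin_line l : event_E L l omega eta ->
  exists o b j n, (n <= 4 * Z.to_nat L * Z.to_nat L * l)%nat /\ good b /\
    1 <= j <= L /\ line o b j (0, 0) = true /\ run eta n (eta ∪ line o b j).
Proof.
  intros (p & Hp & (Hgood & bf & Hbf & Hfull) & bo & Hbo & Hin).
  destruct (box_path_segment l p bf bo Hp Hbf Hbo) as (K & g & HK & Hg0 & HgK & Hnn & Hgp).
  destruct (full_line_absorbed L eta bf Hfull) as (o & jf & Hjf & Eeta).
  destruct (travel_along K g Hnn) with (o := o) (j := 1) as (o' & j' & n & Hn & Hj' & H0 & Hrun);
    [intros k Hk; apply Hgood, Hgp; lia | now rewrite HgK | now left |].
  rewrite Hg0, HgK in *.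
  exists o', bo, j', (Z.to_nat (Z.abs (1 - jf)) * move_time + n)%nat.
  split; [nia | split; [auto | split; [auto | split; [auto |]]]].
  pose proof (sweep o bf jf 1) as Hsweep. rewrite Eeta in Hsweep.
  eapply run_trans; [apply Hsweep | exact Hrun]; auto; lia.
Qed.

Lemma line_event_A o b j : good b -> 1 <= j <= L -> line o b j (0, 0) = true ->
  event_A omega (eta ∪ line o b j).
Proof.
  intros Hb Hj H0. split; [| unfold setU; now rewrite H0, orb_true_r].
  apply seg_spec in H0 as (k & Hk & ->). apply good_cell; auto; lia.
Qed.

Lemma stay_step o b j : good b -> 1 <= j <= L ->
  step omega eta (framed_box L) (3 * Z.to_nat L)
    (eta ∪ line o b j) (cell o b j 2) (eta ∪ line o b j).
Proof.
  intros Hb Hj.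
  assert (Hon : forall k, 1 <= k <= L ->
    omega (cell o b j k) && (eta ∪ line o b j) (cell o b j k) = true).
  { intros k Hk. unfold setU, line. rewrite good_cell, seg_cell by (auto; lia). apply orb_true_r. }
  apply step_setU; auto.
  - apply good_cell; auto; lia.
  - apply (constraint_of_two omega _ _ (cell o b j 1) (cell o b j 3)); try apply Hon; try lia;
      [apply cell_neighbour; lia | apply cell_neighbour; lia | intros E; apply cell_inj in E; lia].
  - apply within_framed_box with b; [apply cell_in_box; lia|].
    apply setU_in_frame; apply line_in_frame; lia.
  - apply card_set_weaken with (Z.to_nat L + Z.to_nat L)%nat; [lia|].
    apply card_setU; apply card_seg; lia.
Qed.

End Boxes.

Lemma scaleL_ge3 eps q : (0 < eps)%R -> (0 < q)%R -> (q < / 4)%R -> 3 <= scaleL q eps.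
Proof.
  intros Heps Hq Hq4. unfold scaleL, Rpower.
  assert (Hln : (ln q < 0)%R) by (rewrite <- ln_1; apply ln_increasing; lra).
  assert (Hinv : (4 < exp (- ln q))%R).
  { rewrite exp_Ropp, exp_ln by lra. apply (Rmult_lt_reg_r q); [lra|]. rewrite Rinv_l; lra. }
  assert (Hx : (4 < exp ((-1 - eps / 3) * ln q))%R).
  { apply Rlt_trans with (1 := Hinv). apply exp_increasing. nra. }
  unfold Int_part. destruct (archimed (exp ((-1 - eps / 3) * ln q))) as [H1 H2].
  assert (4 < up (exp ((-1 - eps / 3) * ln q)))%Z by (apply lt_IZR; lra). lia.
Qed.

Theorem proposition2 :
  forall eps : R, (0 < eps)%R ->
  exists q0 : R, (0 < q0)%R /\
  forall q : R, (0 < q)%R -> (q < q0)%R ->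
  let L := scaleL q eps in
  let l := Z.to_nat (scalel q eps) in
  let N := (4 * Z.to_nat L * Z.to_nat L * l)%nat in
  let D := (3 * Z.to_nat L)%nat in
  let V := (3 * Z.to_nat L * Z.to_nat L)%nat in
  forall omega : env,
  exists Y : site -> list site,
    (forall x, (length (Y x) <= V)%nat) /\
    forall eta : config, event_E L l omega eta ->
    exists (etas : nat -> config) (xs : nat -> site),
      etas 0%nat = eta /\
      event_A omega (etas N) /\
      (forall i, (i < N)%nat ->
         omega (xs i) = true /\
         (etas (S i) = flip (etas i) (xs i) \/ etas (S i) = etas i) /\
         constraint omega (etas i) (xs i)) /\
      (forall i, (i <= N)%nat -> card_le (fun y => etas i y <> eta y) D) /\
      (forall i, (i < N)%nat -> forall y, etas i y <> eta y -> In y (Y (xs i))).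
Proof.
  intros eps Heps. exists (/ 4)%R. split; [lra|].
  intros q Hq Hq4 L l N D V omega.
  assert (HL : 3 <= L) by exact (scaleL_ge3 eps q Heps Hq Hq4).
  exists (framed_box L). split; [intros x; exact (framed_box_length L x HL)|].
  intros eta HE.
  destruct (reach_origin_line L omega eta HL l HE) as (o & b & j & n & Hn & Hb & Hj & H0 & Hrun).
  pose proof (stay_step L omega eta HL o b j Hb Hj) as Hstay.
  assert (HrunN : run omega eta (framed_box L) D eta N (eta ∪ line L o b j)).
  { replace N with (n + (N - n))%nat by lia. eapply run_trans; [exact Hrun | eapply run_stay, Hstay]. }
  destruct (run_sequence _ _ _ _ _ _ _ HrunN) as (etas & xs & E0 & EN & Hsteps).
  exists etas, xs. split; [exact E0 | split; [| split; [| split]]].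
  - rewrite EN. apply line_event_A; auto.
  - intros i Hi. destruct (Hsteps i Hi) as [Hx Hc Hloc _ _]. auto using flip_or_same.
  - intros i Hi. destruct (Nat.eq_dec i N) as [->|Hne].
    + rewrite EN. apply (step_controlled' _ _ _ _ _ _ _ Hstay).
    + apply (step_controlled _ _ _ _ _ _ _ (Hsteps i ltac:(lia))).
  - intros i Hi. apply (step_controlled _ _ _ _ _ _ _ (Hsteps i Hi)).
Qed.
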